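(* Fix an RWA-P instance and weights $\alpha,\beta>0$ (setting as in the context). For an integer $k$, let $f_\alpha^{\max}(k)=\max\{f_\alpha(x,y): (x,y)\text{ feasible},\ f_\beta(x)=k\}$ and $f_\alpha^{\min}(k)=\min\{f_\alpha(x,y): (x,y)\text{ feasible},\ f_\beta(x)=k\}$. Define $$\Omega^{>}=\max\left\{\frac{f_\alpha^{\max}(f_\beta(\hat x))-f_\alpha^{\min}(f_\beta(\tilde x))}{f_\beta(\hat x)-f_\beta(\tilde x)}:\ (\hat x,\hat y),(\tilde x,\tilde y)\text{ feasible},\ f_\beta(\hat x)>f_\beta(\tilde x)\right\},$$ and let $\Omega^{=}$ be the same maximum taken only over feasible pairs with $f_\beta(\hat x)=f_\beta(\tilde x)+1$. Then $\Omega^{>}=\Omega^{=}$. Consequently, if $\alpha,\beta>0$ satisfy $\beta/\alpha>\Omega^{=}$, then for every pair of feasible solutions $(\hat x,\hat y)$, $(\tilde x,\tilde y)$ with $f_\beta(\hat x)>f_\beta(\tilde x)$ we have $f(\hat x,\hat y)<f(\tilde x,\tilde y)$.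
   Context: An RWA-P instance consists of: a directed graph $G=(V,E)$ (parallel arcs allowed), whose arcs are called links; a finite set $\Lambda$ of wavelengths; a finite set $R$ of requests, each request $r$ having a source node $s^r$ and a distinct destination node $t^r$; and for each $r\in R$ finite sets $W^r$ (working lightpaths) and $P^r$ (protection lightpaths). Each lightpath $\ell$ of request $r$ is a directed path in $G$ from $s^r$ to $t^r$ together with a wavelength $\Lambda[\ell]\in\Lambda$; $E[\ell]$ denotes its set of links and its length is $B^r_\ell=|E[\ell]|\ge 1$. Conflict sets: $\mathcal C_1=\{(r,w,p): r\in R, w\in W^r,p\in P^r, E[w]\cap E[p]\ne\emptyset\}$; $\mathcal C_2=\{(r_1,r_2,w,p): r_1\ne r_2, w\in W^{r_1}, p\in P^{r_2}, \Lambda[w]=\Lambda[p], E[w]\cap E[p]\neq\emptyset\}$; $\mathcal C_3=\{(r_1,r_2,w_1,w_2): w_1\in W^{r_1}, w_2\in W^{r_2}, (r_1,w_1)\ne(r_2,w_2), \Lambda[w_1]=\Lambda[w_2], E[w_1]\cap E[w_2]\ne\emptyset\}$; $\mathcal C_4=\{(r_1,r_2,p_1,p_2): p_1\in P^{r_1}, p_2\in P^{r_2}, (r_1,p_1)\ne(r_2,p_2), \Lambda[p_1]=\Lambda[p_2], E[p_1]\cap E[p_2]\ne\emptyset\}$. A solution is a pair of binary vectors $x=(x^r_w)_{r\in R,w\in W^r}$, $y=(y^r_p)_{r\in R,p\in P^r}$; it is feasible if $\sum_{w\in W^r}x^r_w=\sum_{p\in P^r}y^r_p$ and $\sum_{w\in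 W^r}x^r_w\le 1$ for all $r$, $x^r_w+y^r_p\le1$ for $(r,w,p)\in\mathcal C_1$, $x^{r_1}_w+y^{r_2}_p\le1$ for $(r_1,r_2,w,p)\in\mathcal C_2$, $x^{r_1}_{w_1}+x^{r_2}_{w_2}\le1$ for $\mathcal C_3$, $y^{r_1}_{p_1}+y^{r_2}_{p_2}\le 1$ for $\mathcal C_4$. Define link usage $f_\alpha(x,y)=\sum_{r}\big(\sum_{w\in W^r}B^r_wx^r_w+\sum_{p\in P^r}B^r_py^r_p\big)$, number of granted requests $f_\beta(x)=\sum_r\sum_{w\in W^r}x^r_w$, and objective $f(x,y)=\alpha f_\alpha(x,y)-\beta f_\beta(x)$. *)

From HB Require Import structures.
From mathcomp Require Import all_boot all_order all_algebra.
Set Implicit Arguments. Unset Strict Implicit. Unset Printing Implicit Defensive.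
Import Order.TTheory GRing.Theory Num.Theory.

Definition is_dpath (N L : eqType) (tl hd : L -> N) (s t : N) (p : seq L) : bool :=
  match p with
  | [::] => false
  | e :: p' =>
      [&& tl e == s, path (fun a b => hd a == tl b) e p',
          hd (last e p') == t & uniq (s :: map hd p)]
  end.

(* An RWA-P instance.  Working lightpaths (all requests together) are the
   elements of [wlp]; [wreq w] is the request r with w \in W^r.  Same for
   protection lightpaths [plp]. *)
Record rwap := RWAP {
  node : finType;
  link : finType;
  ltail : link -> node;
  lhead : link -> node;
  wavelength : finType;
  req : finType;
  src : req -> node;
  dst : req -> node;
  src_neq_dst : forall r, src r != dst r;
  wlp : finType;
  wreq : wlp -> req;
  wpath : wlp -> seq link;
  wlam : wlp -> wavelength;
  wpath_ok : forall w, is_dpath ltail lhead (src (wreq w)) (dst (wreq w)) (wpath w);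
  (* W^r is a set: no lightpath listed twice for the same request *)
  wlp_inj : forall w1 w2, wreq w1 = wreq w2 -> wpath w1 = wpath w2 ->
              wlam w1 = wlam w2 -> w1 = w2;
  plp : finType;
  preq : plp -> req;
  ppath : plp -> seq link;
  plam : plp -> wavelength;
  ppath_ok : forall p, is_dpath ltail lhead (src (preq p)) (dst (preq p)) (ppath p);
  plp_inj : forall p1 p2, preq p1 = preq p2 -> ppath p1 = ppath p2 ->
              plam p1 = plam p2 -> p1 = p2
}.

Section Defs.
Variable I : rwap.

Definition Ew (w : wlp I) : {set link I} := [set e in wpath w].
Definition Ep (p : plp I) : {set link I} := [set e in ppath p].
Definition Bw (w : wlp I) : nat := #|Ew w|.
Definition Bp (p : plp I) : nat := #|Ep p|.

Definition feasible (x : wlp I -> bool) (y : plp I -> bool) : Prop :=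
  [/\ (forall r : req I,
         #|[set w | (wreq w == r) && x w]| = #|[set p | (preq p == r) && y p]|
         /\ #|[set w | (wreq w == r) && x w]| <= 1)%N,
      (forall w p, wreq w = preq p -> Ew w :&: Ep p != set0 -> ~~ (x w && y p)),
      (forall w p, wreq w != preq p -> wlam w = plam p -> Ew w :&: Ep p != set0 ->
         ~~ (x w && y p)),
      (forall w1 w2, w1 != w2 -> wlam w1 = wlam w2 -> Ew w1 :&: Ew w2 != set0 ->
         ~~ (x w1 && x w2)) &
      (forall p1 p2, p1 != p2 -> plam p1 = plam p2 -> Ep p1 :&: Ep p2 != set0 ->
         ~~ (y p1 && y p2))].

Definition f_alpha (x : wlp I -> bool) (y : plp I -> bool) : nat :=
  (\sum_(w | x w) Bw w + \sum_(p | y p) Bp p)%N.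

Definition f_beta (x : wlp I -> bool) : nat := #|[set w | x w]|.

Definition f_obj (R : numDomainType) (alpha beta : R) x y : R :=
  (alpha * (f_alpha x y)%:R - beta * (f_beta x)%:R)%R.

Definition is_falpha_max (k m : nat) : Prop :=
  (exists x y, [/\ feasible x y, f_beta x = k & f_alpha x y = m]) /\
  (forall x y, feasible x y -> f_beta x = k -> (f_alpha x y <= m)%N).

Definition is_falpha_min (k m : nat) : Prop :=
  (exists x y, [/\ feasible x y, f_beta x = k & f_alpha x y = m]) /\
  (forall x y, feasible x y -> f_beta x = k -> (m <= f_alpha x y)%N).

(* the set of quotients over which Omega is a maximum; [cond kh kt]
   restricts the pairs of levels (kh = f_beta(xhat), kt = f_beta(xtilde)) *)
Definition Omega_set (R : realFieldType) (cond : nat -> nat -> bool) (v : R) : Prop :=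
  exists xh yh xt yt, [/\ feasible xh yh, feasible xt yt,
     cond (f_beta xh) (f_beta xt) &
     exists M m, [/\ is_falpha_max (f_beta xh) M, is_falpha_min (f_beta xt) m &
       v = ((M%:R - m%:R) / ((f_beta xh)%:R - (f_beta xt)%:R))%R]].

Definition Omega_gt_set (R : realFieldType) := @Omega_set R (fun kh kt => kt < kh)%N.
Definition Omega_eq_set (R : realFieldType) := @Omega_set R (fun kh kt => kh == kt.+1)%N.

End Defs.
Arguments Omega_set I R cond v : clear implicits.
Arguments Omega_gt_set I R v : clear implicits.
Arguments Omega_eq_set I R v : clear implicits.

Definition is_max (R : realFieldType) (S : R -> Prop) (v : R) : Prop :=
  S v /\ (forall u, S u -> (u <= v)%R).

(* Levels are downward closed: dropping one granted request (with its working
   and protection lightpath) keeps a solution feasible and lowers f_beta by one.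
   Hence between two attained levels kt < kh every level is attained, and since
   f_alpha^min(i) <= f_alpha^max(i) at each level,
     f_alpha^max(kh) - f_alpha^min(kt)
       <= sum_(kt <= i < kh) (f_alpha^max(i+1) - f_alpha^min(i)),
   so a slope over kh - kt levels is at most the largest unit slope; this gives
   Omega^> = Omega^=.  For the consequence, the f_alpha gap between the two
   solutions is at most (kh - kt) Omega^= < (kh - kt) beta / alpha. *)
From HB Require Import structures.
From mathcomp Require Import all_boot all_order all_algebra.
From mathcomp Require Import zify lra.
From Stdlib Require Import Classical.
Import Order.TTheory GRing.Theory Num.Theory.
Set Implicit Arguments.

Lemma ex_minn_classic (P : nat -> Prop) : (exists n, P n) ->
  exists m, P m /\ forall n, P n -> m <= n.
Proof.
case=> n; elim/ltn_ind: n => n IH Pn.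
have [[k [lt_kn Pk]]|no_smaller] := classic (exists k, k < n /\ P k).
  exact: IH Pk.
exists n; split=> // k Pk; rewrite leqNgt; apply/negP => lt_kn.
by apply: no_smaller; exists k.
Qed.

Lemma ex_maxn_classic (P : nat -> Prop) (b : nat) : (forall n, P n -> n <= b) ->
  (exists n, P n) -> exists m, P m /\ forall n, P n -> n <= m.
Proof.
move=> le_b [n Pn].
have [i [[_ Pbi] min_i]] :
    exists i, (i <= b /\ P (b - i)) /\ forall j, j <= b /\ P (b - j) -> i <= j.
  by apply: ex_minn_classic; exists (b - n); rewrite leq_subr subKn ?le_b.
exists (b - i); split=> // k Pk.
have /min_i : b - k <= b /\ P (b - (b - k)) by rewrite leq_subr subKn ?le_b.
have := le_b k Pk; lia.
Qed.

Section RWAP.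
Variable I : rwap.
Implicit Types (x : wlp I -> bool) (y : plp I -> bool).

Definition drop_req_w (r : req I) x : wlp I -> bool := fun w => x w && (wreq w != r).
Definition drop_req_p (r : req I) y : plp I -> bool := fun p => y p && (preq p != r).

Lemma feasible_drop_req r x y :
  feasible x y -> feasible (drop_req_w r x) (drop_req_p r y).
Proof.
rewrite /drop_req_w /drop_req_p.
have conflict_drop (a b c d : bool) : ~~ (a && b) -> ~~ ((a && c) && (b && d)).
  by case: a; case: b; case: c; case: d.
case=> [card_req C1 C2 C3 C4]; split; last 4 first.
- by move=> *; apply: conflict_drop; apply: C1.
- by move=> *; apply: conflict_drop; apply: C2.
- by move=> *; apply: conflict_drop; apply: C3.
- by move=> *; apply: conflict_drop; apply: C4.
move=> r'; have [->|ne] := eqVneq r' r.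
  have -> : [set w | (wreq w == r) && (x w && (wreq w != r))] = set0.
    by apply/setP => w; rewrite !inE; case: eqP; rewrite ?andbF.
  have -> : [set p | (preq p == r) && (y p && (preq p != r))] = set0.
    by apply/setP => p; rewrite !inE; case: eqP; rewrite ?andbF.
  by rewrite !cards0.
have -> : [set w | (wreq w == r') && (x w && (wreq w != r))]
        = [set w | (wreq w == r') && x w].
  by apply/setP => w; rewrite !inE; case: eqP => // ->; rewrite ne andbT.
have -> : [set p | (preq p == r') && (y p && (preq p != r))]
        = [set p | (preq p == r') && y p].
  by apply/setP => p; rewrite !inE; case: eqP => // ->; rewrite ne andbT.
exact: card_req.
Qed.

Lemma f_beta_drop_req r x :
  f_beta (drop_req_w r x) + #|[set w | (wreq w == r) && x w]| = f_beta x.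
Proof.
rewrite /f_beta -(cardsID [set w | wreq w == r] [set w | x w]) addnC.
by congr (_ + _); apply: eq_card => w; rewrite !inE /drop_req_w andbC.
Qed.

Definition feasible_level (k : nat) : Prop :=
  exists x y, feasible x y /\ f_beta x = k.

Lemma feasible_level_pred k : feasible_level k.+1 -> feasible_level k.
Proof.
case=> x [y [Fxy beta_x]].
have /set0Pn [w] : [set w | x w] != set0 by rewrite -card_gt0 -/(f_beta x) beta_x.
rewrite inE => xw; exists (drop_req_w (wreq w) x), (drop_req_p (wreq w) y).
split; first exact: feasible_drop_req.
have granted : 0 < #|[set w' | (wreq w' == wreq w) && x w']|.
  by rewrite card_gt0; apply/set0Pn; exists w; rewrite inE eqxx xw.
have [card_req _ _ _ _] := Fxy; have [_ le1] := card_req (wreq w).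
have := f_beta_drop_req (wreq w) x; rewrite beta_x; lia.
Qed.

Lemma f_alpha_le_total x y :
  f_alpha x y <= \sum_(w : wlp I) Bw w + \sum_(p : plp I) Bp p.
Proof.
by apply: leq_add; [rewrite [leqRHS](bigID x) | rewrite [leqRHS](bigID y)]; apply: leq_addr.
Qed.

Definition f_alpha_attained (k n : nat) : Prop :=
  exists x y, [/\ feasible x y, f_beta x = k & f_alpha x y = n].

Lemma exists_falpha_max k : feasible_level k -> exists M, is_falpha_max I k M.
Proof.
case=> x [y [Fxy beta_x]].
have bounded n : f_alpha_attained k n -> n <= \sum_(w : wlp I) Bw w + \sum_(p : plp I) Bp p.
  by case=> x' [y' [_ _ <-]]; apply: f_alpha_le_total.
have [|M [attM maxM]] := @ex_maxn_classic _ _ bounded.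
  by exists (f_alpha x y), x, y.
by exists M; split=> // x1 y1 F1 beta1; apply: maxM; exists x1, y1.
Qed.

Lemma exists_falpha_min k : feasible_level k -> exists m, is_falpha_min I k m.
Proof.
case=> x [y [Fxy beta_x]].
have [|m [attm minm]] := @ex_minn_classic (f_alpha_attained k).
  by exists (f_alpha x y), x, y.
by exists m; split=> // x1 y1 F1 beta1; apply: minm; exists x1, y1.
Qed.

Lemma falpha_max_level k M : is_falpha_max I k M -> feasible_level k.
Proof. by case=> [[x [y [Fxy beta_x _]]] _]; exists x, y. Qed.

Lemma falpha_min_le_max k m M :
  is_falpha_min I k m -> is_falpha_max I k M -> m <= M.
Proof. by case=> _ minm [[x [y [Fxy beta_x <-]]] _]; apply: minm. Qed.

Variable R : realFieldType.
Local Open Scope ring_scope.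

Lemma Omega_eq_set_step k M m : is_falpha_max I k.+1 M -> is_falpha_min I k m ->
  Omega_eq_set I R (M%:R - m%:R).
Proof.
move=> HM Hm; have [[xh [yh [Fh beta_h _]]] _] := HM.
have [[xt [yt [Ft beta_t _]]] _] := Hm.
exists xh, yh, xt, yt; rewrite beta_h beta_t; split=> //.
by exists M, m; split=> //; rewrite -addn1 natrD addrAC subrr add0r divr1.
Qed.

Lemma Omega_eq_subset_gt u : Omega_eq_set I R u -> Omega_gt_set I R u.
Proof.
case=> xh [yh [xt [yt [Fh Ft /eqP beta_h slope]]]].
by exists xh, yh, xt, yt; split=> //; rewrite beta_h.
Qed.

Lemma falpha_gap_le_Omega_eq kt kh M m : (kt < kh)%N ->
  is_falpha_max I kh M -> is_falpha_min I kt m ->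
  exists2 u, Omega_eq_set I R u & M%:R - m%:R <= (kh - kt)%:R * u.
Proof.
elim: kh M => // kh IH M; rewrite ltnS leq_eqVlt => /predU1P[<- | lt_kt] HM Hm.
  by exists (M%:R - m%:R); [exact: Omega_eq_set_step HM Hm | rewrite subSnn mul1r].
have level_kh := feasible_level_pred (falpha_max_level HM).
have [M' HM'] := exists_falpha_max level_kh.
have [m' Hm'] := exists_falpha_min level_kh.
have [u1 eq_u1 gap1] := IH M' lt_kt HM' Hm.
have eq_u0 := Omega_eq_set_step HM Hm'.
have le_mM' : m'%:R <= M'%:R :> R by rewrite ler_nat (falpha_min_le_max Hm' HM').
have -> : (kh.+1 - kt)%:R = (kh - kt)%:R + 1 :> R by rewrite subSn 1?ltnW // -addn1 natrD.
have [le_u01 | lt_u10] := lerP (M%:R - m'%:R) u1.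
  by exists u1 => //; lra.
exists (M%:R - m'%:R) => //.
have : (kh - kt)%:R * u1 <= (kh - kt)%:R * (M%:R - m'%:R) :> R.
  by rewrite ler_wpM2l // ltW.
lra.
Qed.

Lemma Omega_gt_le_Omega_eq u : Omega_gt_set I R u ->
  exists2 u', Omega_eq_set I R u' & u <= u'.
Proof.
case=> xh [yh [xt [yt [_ _ lt_beta [M [m [HM Hm ->]]]]]]].
have [u' eq_u' gap] := falpha_gap_le_Omega_eq lt_beta HM Hm.
rewrite natrB 1?ltnW // in gap.
by exists u' => //; rewrite ler_pdivrMr ?subr_gt0 ?ltr_nat // mulrC.
Qed.

End RWAP.

Local Open Scope ring_scope.

Theorem proposition1 (R : realFieldType) (I : rwap) :
  (forall v : R, is_max (Omega_gt_set I R) v <-> is_max (Omega_eq_set I R) v) /\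
  (forall (Omega_eq alpha beta : R),
     is_max (Omega_eq_set I R) Omega_eq ->
     (0 < alpha)%R -> (0 < beta)%R -> (Omega_eq < beta / alpha)%R ->
     forall (xh : wlp I -> bool) (yh : plp I -> bool)
            (xt : wlp I -> bool) (yt : plp I -> bool),
       feasible xh yh -> feasible xt yt -> (f_beta xt < f_beta xh)%N ->
       (f_obj alpha beta xh yh < f_obj alpha beta xt yt)%R).
Proof.
split=> [v|Om al be [_ max_Om] al_gt0 _ lt_Om xh yh xt yt Fh Ft lt_beta].
  split=> [[gt_v max_v] | [eq_v max_v]].
    have [u eq_u le_vu] := Omega_gt_le_Omega_eq gt_v.
    have le_uv := max_v u (Omega_eq_subset_gt eq_u).
    have uv : u = v by apply/le_anti; rewrite le_uv le_vu.
    by subst u; split=> // w /Omega_eq_subset_gt /max_v.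
  split=> [|u /Omega_gt_le_Omega_eq [w /max_v le_wv le_uw]]; last exact: le_trans le_wv.
  exact: Omega_eq_subset_gt.
have [M HM] : exists M, is_falpha_max I (f_beta xh) M.
  by apply: exists_falpha_max; exists xh, yh.
have [m Hm] : exists m, is_falpha_min I (f_beta xt) m.
  by apply: exists_falpha_min; exists xt, yt.
have [u eq_u gap] := falpha_gap_le_Omega_eq R lt_beta HM Hm.
have le_h : (f_alpha xh yh)%:R <= M%:R :> R by rewrite ler_nat; apply: HM.2.
have le_t : m%:R <= (f_alpha xt yt)%:R :> R by rewrite ler_nat; apply: Hm.2.
have slope : u * al < be by rewrite -ltr_pdivlMr // (le_lt_trans (max_Om u eq_u)).
rewrite natrB 1?ltnW // in gap; rewrite /f_obj.
have d_gt0 : 0 < (f_beta xh)%:R - (f_beta xt)%:R :> R by rewrite subr_gt0 ltr_nat.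
nra.
Qed.
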